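(* Let $n\ge2$, $d,p,K\ge1$, $P_1,\dots,P_n\in\mathbb{R}^{d\times p}$, $G_{ij}=P_i^TP_j$, and define $G^A=\frac1n\sum_iG_{ii}$, $G^T=\frac1{n^2}\sum_i\sum_jG_{ij}$, $G^D=G^A-G^T$. Let $\xi_X,\xi_Y\in\mathbb{R}^{p\times K}$, $X_i=P_i\xi_X$, $Y_i=P_i\xi_Y\in\mathbb{R}^{d\times K}$, let $X,Y\in\mathbb{R}^{nd\times K}$ stack the $X_i$ (resp. $Y_i$) vertically, let $\bar X,\bar Y$ be the projections of the columns of $X,Y$ onto the consensus subspace $\mathcal{C}=\{(z_1,\dots,z_n):z_1=\dots=z_n\in\mathbb{R}^d\}$ (i.e. each block replaced by the agent average $\frac1n\sum_iX_i$, resp. $\frac1n\sum_iY_i$), and $X_\perp=X-\bar X$, $Y_\perp=Y-\bar Y$. Then, for $\lambda_-\le\lambda_+$, the constraints $\bar X=\bar Y$, $(Y_\perp-\lambda_-X_\perp)^T(Y_\perp-\lambda_+X_\perp)\preceq0$, $X_\perp^TY_\perp=Y_\perp^TX_\perp$ are respectively equivalent to $$(\xi_X-\xi_Y)^TG^T(\xi_X-\xi_Y)=0,\qquad(\xi_Y-\lambda_-\xi_X)^TG^D(\xi_Y-\lambda_+\xi_X)\preceq0,\qquad \xi_Y^TG^D\xi_X-\xi_X^TG^D\xi_Y=0,$$ which do not involve $n$. *)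

From HB Require Import structures.
From mathcomp Require Import all_boot all_order all_algebra.
Set Implicit Arguments. Unset Strict Implicit. Unset Printing Implicit Defensive.
Import Order.TTheory GRing.Theory Num.Theory.
Local Open Scope ring_scope.

Section Defs.
Variables (R : realFieldType) (n d p K : nat).
Implicit Types (P : 'I_n -> 'M[R]_(d, p)).

Definition gram P (i j : 'I_n) : 'M[R]_p := (P i)^T *m P j.
Definition GA P : 'M[R]_p := (n%:R)^-1 *: \sum_(i < n) gram P i i.
Definition GT P : 'M[R]_p :=
  ((n%:R) ^+ 2)^-1 *: \sum_(i < n) \sum_(j < n) gram P i j.
Definition GD P : 'M[R]_p := GA P - GT P.

Definition stack P (xi : 'M[R]_(p, K)) : 'M[R]_(\sum_(i < n) d, K) :=
  \mxcol_(i < n) (P i *m xi).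

Definition cons_proj (X : 'M[R]_(\sum_(i < n) d, K)) : 'M[R]_(\sum_(i < n) d, K) :=
  \mxcol_(i < n) ((n%:R)^-1 *: \sum_(j < n) submxcol X j).
End Defs.

(* M ⪯ 0 : the quadratic form of M is nonpositive (for a nonsymmetric M,
   this is the same as its symmetric part being negative semidefinite) *)
Definition nsd (R : realFieldType) (m : nat) (M : 'M[R]_m) : Prop :=
  forall v : 'cV[R]_m, (v^T *m M *m v) ord0 ord0 <= 0 :> R.

From HB Require Import structures.
From mathcomp Require Import all_boot all_order all_algebra.
Import Order.TTheory GRing.Theory Num.Theory.
Local Open Scope ring_scope.

(* Stacking is right multiplication by a column block matrix: X = [P_i] xi_X.
   The consensus projection replaces every block by the mean block Pbar, so
   Xbar = [Pbar] xi_X and X_perp = [P_i - Pbar] xi_X.  Every product of two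
   such stacked matrices is therefore a^T (M^T M) b, and the Gram matrices
   M^T M of [Pbar] and [P_i - Pbar] are n G^T and n G^D (the latter because the
   centred blocks sum to zero).  Since n > 0 the factor n cancels, and
   M^T M = 0 forces M = 0 over an ordered field. *)

Lemma trmx_mul_self_eq0 (R : realDomainType) m k (M : 'M[R]_(m, k)) :
  (M^T *m M == 0) = (M == 0).
Proof.
apply/eqP/eqP => [MtM0|->]; last by rewrite mulmx0.
apply/matrixP => i j; have := congr1 (fun A : 'M[R]_k => A j j) MtM0.
rewrite !mxE => /psumr_eq0P sq0.
have sq_ge0 l : 0 <= M^T j l * M l j by rewrite mxE -expr2 sqr_ge0.
by move/eqP: (sq0 (fun l _ => sq_ge0 l) i isT); rewrite mxE mulf_eq0 orbb => /eqP.
Qed.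

Lemma nsdZ (R : realFieldType) m (a : R) (M : 'M[R]_m) :
  0 < a -> nsd (a *: M) <-> nsd M.
Proof.
move=> a_gt0; have quadZ v : (v^T *m (a *: M) *m v) ord0 ord0 =
                            a * (v^T *m M *m v) ord0 ord0.
  by rewrite -scalemxAr -scalemxAl mxE.
by split=> nsdM v; [have := nsdM v; rewrite quadZ | rewrite quadZ];
  rewrite pmulr_rle0.
Qed.

Section StackedBlocks.
Variables (R : realFieldType) (n d p : nat).
Implicit Types (A B : 'I_n -> 'M[R]_(d, p)).

Lemma stackE K A (xi : 'M[R]_(p, K)) : stack A xi = \mxcol_i A i *m xi.
Proof. by rewrite mxcol_mul. Qed.

Lemma tr_stack_mul_stack K A B (a b : 'M[R]_(p, K)) :
  (stack A a)^T *m stack B b = a^T *m (\sum_i (A i)^T *m B i) *m b.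
Proof.
rewrite !stackE trmx_mul tr_mxcol mulmxA -(mulmxA _ _ (\mxcol_i B i)).
by rewrite mul_mxrow_mxcol.
Qed.

Lemma stackB K A (a b : 'M[R]_(p, K)) : stack A (a - b) = stack A a - stack A b.
Proof. by rewrite !stackE mulmxBr. Qed.

Lemma stackZ K A (c : R) (a : 'M[R]_(p, K)) : stack A (c *: a) = c *: stack A a.
Proof. by rewrite !stackE scalemxAr. Qed.

Variable P : 'I_n -> 'M[R]_(d, p).

Definition block_mean : 'M[R]_(d, p) := (n%:R)^-1 *: \sum_i P i.

Definition centered_block i : 'M[R]_(d, p) := P i - block_mean.

Lemma cons_proj_stack K (xi : 'M[R]_(p, K)) :
  cons_proj (stack P xi) = stack (fun _ : 'I_n => block_mean) xi.
Proof.
rewrite /cons_proj /stack; apply: eq_mxcol => i; under eq_bigr do rewrite mxcolK.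
by rewrite -mulmx_suml -scalemxAl.
Qed.

Lemma stack_subr_cons_proj K (xi : 'M[R]_(p, K)) :
  stack P xi - cons_proj (stack P xi) = stack centered_block xi.
Proof.
by rewrite cons_proj_stack /stack -mxcolB; apply: eq_mxcol => i; rewrite mulmxBl.
Qed.

Lemma sum_gram_mean : \sum_(i < n) block_mean^T *m block_mean = n%:R *: GT P.
Proof.
rewrite sumr_const card_ord -scaler_nat /GT /gram /block_mean; congr (_ *: _).
rewrite linearZ /= linearZ /= -scalemxAl scalerA -expr2 exprVn; congr (_ *: _).
by rewrite [_^T]raddf_sum mulmx_suml; apply: eq_bigr => i _; rewrite mulmx_sumr.
Qed.

Hypothesis n_gt0 : (0 < n)%N.

Let n_neq0 : n%:R != 0 :> R.
Proof. by rewrite pnatr_eq0 -lt0n. Qed.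

Lemma sum_centered_block : \sum_i centered_block i = 0.
Proof.
rewrite sumrB sumr_const card_ord -scaler_nat /block_mean scalerA.
by rewrite mulfV ?n_neq0 // scale1r subrr.
Qed.

Lemma sum_gram_centered :
  \sum_i (centered_block i)^T *m centered_block i = n%:R *: GD P.
Proof.
have -> : \sum_i (centered_block i)^T *m centered_block i =
          \sum_i (centered_block i)^T *m P i.
  under eq_bigr do rewrite {2}/centered_block mulmxBr.
  rewrite sumrB -mulmx_suml -[X in X *m _]raddf_sum sum_centered_block.
  by rewrite raddf0 mul0mx subr0.
have sumP : \sum_i P i = n%:R *: block_mean.
  by rewrite scalerA mulfV ?n_neq0 // scale1r.
under eq_bigr do rewrite /centered_block [_^T]linearB mulmxBl.
rewrite sumrB -mulmx_sumr sumP -scalemxAr /GD /GA scalerBr scalerA.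
by rewrite mulfV ?n_neq0 // scale1r -sum_gram_mean sumr_const card_ord scaler_nat.
Qed.

Lemma tr_stack_mean_mul K (a b : 'M[R]_(p, K)) :
  (stack (fun _ : 'I_n => block_mean) a)^T
    *m stack (fun _ : 'I_n => block_mean) b = n%:R *: (a^T *m GT P *m b).
Proof. by rewrite tr_stack_mul_stack sum_gram_mean -scalemxAr -scalemxAl. Qed.

Lemma tr_stack_centered_mul K (a b : 'M[R]_(p, K)) :
  (stack centered_block a)^T *m stack centered_block b =
  n%:R *: (a^T *m GD P *m b).
Proof. by rewrite tr_stack_mul_stack sum_gram_centered -scalemxAr -scalemxAl. Qed.

End StackedBlocks.

Theorem proposition9 (R : realFieldType) (n d p K : nat)
  (hn : (2 <= n)%N) (hd : (1 <= d)%N) (hp : (1 <= p)%N) (hK : (1 <= K)%N)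
  (P : 'I_n -> 'M[R]_(d, p)) (xiX xiY : 'M[R]_(p, K)) (lm lp : R)
  (hl : lm <= lp) :
  let X := stack P xiX in
  let Y := stack P xiY in
  let Xbar := cons_proj X in
  let Ybar := cons_proj Y in
  let Xp := X - Xbar in
  let Yp := Y - Ybar in
  [/\ Xbar = Ybar <-> (xiX - xiY)^T *m GT P *m (xiX - xiY) = 0,
      nsd ((Yp - lm *: Xp)^T *m (Yp - lp *: Xp)) <->
        nsd ((xiY - lm *: xiX)^T *m GD P *m (xiY - lp *: xiX)) &
      Xp^T *m Yp = Yp^T *m Xp <->
        (xiY^T *m GD P *m xiX) - (xiX^T *m GD P *m xiY) = 0].
Proof.
move=> X Y Xbar Ybar Xp Yp.
have n_gt0 : (0 < n)%N by apply: leq_trans hn.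
have n_neq0 : n%:R != 0 :> R by rewrite pnatr_eq0 -lt0n.
have nZ_eq0 (M : 'M[R]_K) : (n%:R *: M == 0) = (M == 0).
  by rewrite scalemx_eq0 (negPf n_neq0).
rewrite /Xp /Yp /X /Y !stack_subr_cons_proj; split.
- rewrite /Xbar /Ybar !cons_proj_stack; split => [eqXY | GT0].
  + apply/eqP; rewrite -nZ_eq0 -tr_stack_mean_mul.
    by rewrite trmx_mul_self_eq0 stackB eqXY subrr.
  + apply/eqP; rewrite -subr_eq0 -stackB -trmx_mul_self_eq0.
    by rewrite tr_stack_mean_mul GT0 scaler0.
- rewrite -!stackZ -!stackB tr_stack_centered_mul //.
  by apply: (@nsdZ R K); rewrite ltr0n.
- rewrite !tr_stack_centered_mul //; split => [eqXY | /eqP].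
  + by rewrite (scalerI n_neq0 eqXY) subrr.
  + by rewrite subr_eq0 => /eqP ->.
Qed.
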